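(* Let $p$ be a prime and let $b>1$ be an integer which is not a power of $2$, with $p\nmid b$. Let $\operatorname{rad}(b)$ be the product of the distinct primes dividing $b$ and $\varphi$ Euler's totient function. (a) If $a,c$ are positive integers such that $c$ is a primitive divisor of $p^a-1$, $\varphi(\operatorname{rad}(b))\mid a$ and $\gcd\big(\tfrac{p^a-1}{c},b\big)=1$, then $g\big(\tfrac{p^{ab}-1}{bc},p^{ab}\big)=b\,g\big(\tfrac{p^a-1}{c},p^a\big)$. (b) In particular, writing $a_0=\varphi(\operatorname{rad}(b))$, if $c$ is a primitive divisor of $p^{a_0}-1$ with $\gcd\big(\tfrac{p^{a_0}-1}{c},b\big)=1$, then $$g\Big(\tfrac{p^{b a_0}-1}{bc},\,p^{b a_0}\Big)=b\,g\Big(\tfrac{p^{a_0}-1}{c},\,p^{a_0}\Big).$$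
   Context: For a prime power $q$ and a positive integer $k$, the Waring number $g(k,q)$ is the smallest $s$ (if it exists) such that every element of $\mathbb{F}_q$ is a sum of $s$ $k$-th powers of elements of $\mathbb{F}_q$. An integer $e$ is a primitive divisor of $p^a-1$ if $e\mid p^a-1$ and $e\nmid p^u-1$ for every $1\le u<a$. *)

From HB Require Import structures.
From mathcomp Require Import all_boot all_order all_algebra all_field.
From Stdlib Require Import ClassicalEpsilon.
Set Implicit Arguments. Unset Strict Implicit. Unset Printing Implicit Defensive.
Import GRing.Theory.

Definition sum_of_kpowers (F : finFieldType) (k s : nat) (x : F) : bool :=
  [exists f : {ffun 'I_s -> F}, x == (\sum_(i < s) f i ^+ k)%R].

Definition waring_ok (F : finFieldType) (k s : nat) : bool :=
  [forall x : F, sum_of_kpowers k s x].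

Definition waring_number (F : finFieldType) (k : nat) : option nat :=
  match excluded_middle_informative (exists s, waring_ok F k s) with
  | left H => Some (ex_minn H)
  | right _ => None
  end.

Definition radn (n : nat) : nat := \prod_(r <- primes n) r.

Definition primitive_divisor (p a e : nat) : Prop :=
  e %| p ^ a - 1 /\ forall u, 1 <= u < a -> ~~ (e %| p ^ u - 1).

(* Write q = p^a, k = (q - 1)/c and k' = (q^b - 1)/(bc).  Since phi(rad b) | a, every
   prime factor of b divides q - 1, and 4 | q - 1 when b is even (b then has an odd prime
   factor r, so a is even).  Lifting the exponent in 1 + q + ... + q^(e-1) then shows that
   q has multiplicative order exactly b modulo bc.
   Embed F_q into F_(q^b) and let th be a primitive bc-th root of unity there.  Its
   Frobenius conjugates th^(q^i), i < b, are distinct, so 1, th, ..., th^(b-1) is a basis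
   of F_(q^b) over F_q; and the k'-th powers of F_(q^b) are exactly the th^j y with j < b
   and y a k-th power of F_q.  Writing an element in this basis, s k-th powers per
   coordinate give bs k'-th powers.  Conversely, if y (1 + th + ... + th^(b-1)) is a sum of
   s k'-th powers th^(j_i) y_i, grouping the terms by j_i expresses y in every coordinate,
   and some coordinate uses at most s/b of them. *)

From HB Require Import structures.
From mathcomp Require Import all_boot all_order all_algebra all_field all_solvable zify.
From Stdlib Require Import Classical ClassicalEpsilon.
Set Implicit Arguments. Unset Strict Implicit. Unset Printing Implicit Defensive.
Import GRing.Theory.

(** * Geometric sums and the order of q modulo bc *)

Definition geom_sum (x n : nat) : nat := \sum_(i < n) x ^ i.

Lemma expn_sub1_geom_sum x n : 0 < x -> x ^ n - 1 = (x - 1) * geom_sum x n.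
Proof. by move=> x_gt0; rewrite !subn1 predn_exp. Qed.

Lemma geom_sumD x m n : geom_sum x (m + n) = geom_sum x m + x ^ m * geom_sum x n.
Proof.
rewrite /geom_sum big_split_ord /= big_distrr /=.
by congr (_ + _); apply: eq_bigr => i _; rewrite expnD.
Qed.

Lemma geom_sumM x m n : geom_sum x (m * n) = geom_sum x m * geom_sum (x ^ m) n.
Proof.
elim: n => [|n IHn]; first by rewrite muln0 /geom_sum !big_ord0 muln0.
rewrite mulnSr geom_sumD IHn /geom_sum big_ord_recr /= -expnM mulnDr.
by rewrite [_ * x ^ _]mulnC.
Qed.

Lemma geom_sum_mod r x n : 0 < x -> r %| x - 1 -> geom_sum x n = n %[mod r].
Proof.
move=> x_gt0 /dvdnP[y Hy]; have -> : x = y * r + 1 by lia.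
rewrite /geom_sum -modn_summ (eq_bigr (fun _ => 1 %% r)) => [|i _].
  by rewrite sum_nat_const card_ord modnMmr muln1.
by rewrite modnMDXl exp1n.
Qed.

Lemma geom_sum_expand x r : 0 < x -> geom_sum x r = r + (x - 1) * \sum_(i < r) geom_sum x i.
Proof.
move=> x_gt0; rewrite big_distrr /= -[r in r + _]card_ord -sum1_card -big_split /=.
by apply: eq_bigr => i _; rewrite -expn_sub1_geom_sum // add1n subn1 prednK ?expn_gt0 ?x_gt0.
Qed.

Lemma geom_sum_prime_mod r x : prime r -> 0 < x -> r %| x - 1 -> (r = 2 -> 4 %| x - 1) ->
  geom_sum x r = r %[mod r ^ 2].
Proof.
move=> r_pr x_gt0 r_dvd r2_dvd; rewrite geom_sum_expand // -modnDmr.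
suff /eqP -> : r ^ 2 %| (x - 1) * \sum_(i < r) geom_sum x i by rewrite addn0.
have [r2|r_neq2] := eqVneq r 2.
  by rewrite r2 big_ord_recr big_ord1 /geom_sum !big_ord_recl !big_ord0 expn0 muln1 r2_dvd.
have r_odd : odd r by apply: contraR r_neq2 => /(prime_oddPn r_pr) ->.
(* The sum is congruent to 0 + 1 + ... + (r - 1) = 'C(r, 2) modulo r. *)
rewrite expnS expn1 dvdn_mul //.
rewrite /dvdn -modn_summ (eq_bigr (fun i : 'I_r => i %% r)) => [|i _]; last exact: geom_sum_mod.
by rewrite modn_summ -(big_mkord xpredT id) bin2_sum bin2odd // -/(dvdn _ _) dvdn_mulr.
Qed.

Lemma geom_sum_prime_factor b x r : 0 < b -> 0 < x ->
  (forall s, prime s -> s %| b -> s %| x - 1) -> (2 %| b -> 4 %| x - 1) ->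
  prime r -> r %| b -> exists2 u, geom_sum x r = r * u & coprime u b.
Proof.
move=> b_gt0 x_gt0 prime_dvd_x four_dvd_x r_pr r_b; have r_gt1 := prime_gt1 r_pr.
have /eqP := geom_sum_prime_mod r_pr x_gt0 (prime_dvd_x r r_pr r_b)
  (fun r2 => four_dvd_x (eq_ind r (dvdn^~ b) r_b 2 r2)).
rewrite [r %% _]modn_small; last by rewrite expnS expn1 ltn_Pmulr // prime_gt0.
set G := geom_sum x r; set u := r * (G %/ r ^ 2) + 1 => /eqP G_mod.
have G_eq : G = r * u.
  by rewrite {1}(divn_eq G (r ^ 2)) G_mod mulnDr muln1 mulnA mulnn [r ^ 2 * _]mulnC.
exists u => //; rewrite coprime_has_primes ?addn_gt0 ?orbT //; apply/hasPn => s.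
rewrite !mem_primes => /and3P[s_pr _ s_b]; apply/negP => /and3P[_ _ s_u].
have s_r : s %| r.
  by rewrite /dvdn -(geom_sum_mod r x_gt0 (prime_dvd_x s s_pr s_b)) -/G -/(dvdn _ _) G_eq dvdn_mull.
have s_eq_r : s = r by apply/eqP; rewrite -dvdn_prime2.
by move: s_u; rewrite s_eq_r dvdn_addr ?dvdn_mulr // dvdn1 gtn_eqF.
Qed.

Lemma dvdn_geom_sum b x e : 0 < b -> 0 < x ->
  (forall r, prime r -> r %| b -> r %| x - 1) -> (2 %| b -> 4 %| x - 1) ->
  (b %| geom_sum x e) = (b %| e).
Proof.
elim/ltn_ind: b x e => b IHb x e b_gt0 x_gt0 prime_dvd_x four_dvd_x.
have [b_le1|b_gt1] := leqP b 1; first by rewrite (_ : b = 1) ?dvd1n //; lia.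
set r := pdiv b; have r_pr : prime r by apply: pdiv_prime.
have r_b : r %| b by apply: pdiv_dvd.
have [r_e|r_ne] := boolP (r %| e); last first.
  rewrite (contraNF (dvdn_trans r_b) r_ne); apply: contraNF r_ne => /(dvdn_trans r_b).
  by rewrite /dvdn geom_sum_mod // prime_dvd_x.
have [u G_eq u_cop] := geom_sum_prime_factor b_gt0 x_gt0 prime_dvd_x four_dvd_x r_pr r_b.
set b' := b %/ r; have b_eq : b = r * b' by rewrite mulnC divnK.
have b'_b : b' %| b by rewrite b_eq dvdn_mull.
have b'_gt0 : 0 < b' by move: b_gt0; rewrite b_eq muln_gt0 => /andP[].
have xr_gt0 : 0 < x ^ r by rewrite expn_gt0 x_gt0.
have x1_xr1 : x - 1 %| x ^ r - 1 by rewrite expn_sub1_geom_sum // dvdn_mulr.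
rewrite -(divnK r_e) [_ * r]mulnC geom_sumM G_eq -mulnA b_eq !dvdn_pmul2l ?prime_gt0 //.
rewrite Gauss_dvdr; last by rewrite coprime_sym (coprime_dvdr b'_b).
apply: IHb => //.
- by rewrite b_eq ltn_Pmull ?prime_gt1.
- by move=> s s_pr s_b'; apply: dvdn_trans x1_xr1; apply: prime_dvd_x (dvdn_trans s_b' b'_b).
- by move=> two_b'; apply: dvdn_trans x1_xr1; apply: four_dvd_x (dvdn_trans two_b' b'_b).
Qed.

Lemma fermat_dvdn_expn_sub1 p r a : prime p -> prime r -> p != r -> r.-1 %| a ->
  r %| p ^ a - 1.
Proof.
move=> p_pr r_pr p_neq_r /dvdnP[t ->].
have p_r : coprime p r by rewrite prime_coprime // dvdn_prime2.
rewrite -eqn_mod_dvd ?expn_gt0 ?prime_gt0 // mulnC expnM -modnXm.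
by rewrite -(totient_prime r_pr) Euler_exp_totient // modnXm exp1n.
Qed.

Lemma pred_dvdn_totient_radn b r : 0 < b -> prime r -> r %| b -> r.-1 %| totient (radn b).
Proof.
move=> b_gt0 r_pr r_b; have r_primes : r \in primes b by rewrite mem_primes r_pr b_gt0.
have rad_gt0 : 0 < radn b.
  by rewrite /radn big_seq prodn_cond_gt0 // => s; rewrite mem_primes => /andP[/prime_gt0].
have r_rad : r %| radn b by rewrite /radn (big_rem r) //= dvdn_mulr.
rewrite totientE // (big_rem r) /=; last by rewrite mem_primes r_pr rad_gt0.
by rewrite -mulnA dvdn_mulr.
Qed.

Lemma odd_prime_dvd_of_not_pow2 b : 0 < b -> ~ (exists n, b = 2 ^ n) ->
  exists r, [/\ prime r, r %| b & odd r].
Proof.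
move=> b_gt0 not_pow2; set m := b`_2^'.
have m_gt1 : 1 < m.
  rewrite ltn_neqAle part_gt0 andbT eq_sym; apply/eqP => m1; apply: not_pow2.
  by exists (logn 2 b); rewrite -p_part -{1}(partnC 2 b_gt0) -/m m1 muln1.
have r_pr := pdiv_prime m_gt1; exists (pdiv m); split => //.
  exact: dvdn_trans (pdiv_dvd m) (dvdn_part _ _).
have : pdiv m \in (2 : nat_pred)^' by apply: (pnatPpi (part_pnat _ b)); rewrite pi_pdiv.
by rewrite !inE; apply: contraR => /(prime_oddPn r_pr) ->.
Qed.

Section MultiplicativeOrder.

Variables (p b a : nat).
Hypotheses (p_pr : prime p) (b_gt0 : 0 < b) (b_not_pow2 : ~ (exists n, b = 2 ^ n))
  (p_ndvd_b : ~~ (p %| b)) (totient_dvd_a : totient (radn b) %| a).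

Let q := p ^ a.
Let q_gt0 : 0 < q. Proof. by rewrite expn_gt0 prime_gt0. Qed.

Lemma prime_dvd_expn_sub1 r : prime r -> r %| b -> r %| q - 1.
Proof.
move=> r_pr r_b; apply: fermat_dvdn_expn_sub1 => //.
  by apply: contraNneq p_ndvd_b => ->.
exact: dvdn_trans (pred_dvdn_totient_radn b_gt0 r_pr r_b) totient_dvd_a.
Qed.

Lemma four_dvd_expn_sub1 : 2 %| b -> 4 %| q - 1.
Proof.
move=> two_b; have [r [r_pr r_b r_odd]] := odd_prime_dvd_of_not_pow2 b_gt0 b_not_pow2.
have two_a : 2 %| a.
  apply: dvdn_trans (dvdn_trans (pred_dvdn_totient_radn b_gt0 r_pr r_b) totient_dvd_a).
  by rewrite dvdn2 -subn1 oddB ?prime_gt0 // r_odd.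
have p_odd : odd p.
  by apply: contraR p_ndvd_b => /(prime_oddPn p_pr) ->.
rewrite /q; have [a' ->] := dvdnP two_a; rewrite expnM.
have [h ->] : exists h, p ^ a' = h.*2.+1.
  by exists (p ^ a')./2; rewrite -[LHS]odd_double_half oddX p_odd orbT.
rewrite -!muln2; lia.
Qed.

Variable c : nat.
Hypotheses (c_gt0 : 0 < c) (c_dvd : c %| q - 1) (cofactor_coprime : coprime ((q - 1) %/ c) b).

Lemma dvdn_expn_sub1 e : (b * c %| q ^ e - 1) = (b %| e).
Proof.
rewrite expn_sub1_geom_sum // -(divnK c_dvd) mulnAC dvdn_pmul2r //.
rewrite Gauss_dvdr 1?coprime_sym //.
by apply: dvdn_geom_sum => //; [apply: prime_dvd_expn_sub1 | apply: four_dvd_expn_sub1].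
Qed.

End MultiplicativeOrder.

(** * Embedding finite fields *)

Local Open Scope ring_scope.

Section SimpleExtensionEmbedding.

Variables (K L M : fieldType) (iL : {rmorphism K -> L}) (iM : {rmorphism K -> M}) (al : L).
Hypothesis al_gen : forall x : L, exists P : {poly K}, x = (map_poly iL P).[al].

Let ev (P : {poly K}) := (map_poly iL P).[al].
Let evB P Q : ev (P - Q) = ev P - ev Q. Proof. by rewrite /ev rmorphB !hornerE. Qed.
Let evM P Q : ev (P * Q) = ev P * ev Q. Proof. by rewrite /ev rmorphM !hornerE. Qed.

Lemma vanishing_ideal_generator P0 : P0 != 0 -> ev P0 = 0 ->
  exists2 m : {poly K}, ev m = 0 & forall P, ev P = 0 -> m %| P.
Proof.
elim: {P0}(size P0).+1 {-2}P0 (ltnSn (size P0)) => [|n IHn] P0 P0_size P0_neq0 P0_root //.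
have [P0_gen|] := classic (forall P, ev P = 0 -> P0 %| P); first by exists P0.
move=> /not_all_ex_not[P /(imply_to_and (ev P = 0))[P_root P0_ndvd]].
apply: (IHn (P %% P0)).
- by rewrite -ltnS (leq_trans _ P0_size) // ltnS ltn_modp.
- by apply/eqP => /modp_eq0P.
have -> : P %% P0 = P - P %/ P0 * P0 by rewrite {2}(divp_eq P P0) addrAC subrr add0r.
by rewrite evB evM P_root P0_root mulr0 subrr.
Qed.

Lemma rmorph_of_root (m : {poly K}) (be : M) : (forall P, ev P = 0 -> m %| P) ->
  root (map_poly iM m) be -> inhabited {rmorphism L -> M}.
Proof.
move=> m_gen be_root; pose evbe (P : {poly K}) := (map_poly iM P).[be].
have evbe_congr P Q : ev P = ev Q -> evbe P = evbe Q.
  move=> /eqP; rewrite -subr_eq0 -evB => /eqP/m_gen/divpK PQ_eq.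
  apply/eqP; rewrite -subr_eq0 /evbe -hornerN -hornerD -rmorphB -PQ_eq rmorphM hornerM.
  by rewrite (eqP be_root) mulr0.
have al_gen' x : exists P, x == ev P by have [P ->] := al_gen x; exists P.
pose psi x := evbe (xchoose (al_gen' x)).
have psiE P : psi (ev P) = evbe P by apply: evbe_congr; rewrite -(eqP (xchooseP (al_gen' _))).
have psiB : zmod_morphism psi.
  move=> x y; have [P ->] := al_gen x; have [Q ->] := al_gen y; by rewrite -evB !psiE /evbe rmorphB !hornerE.
have psiM : monoid_morphism psi.
  have ev1 : ev 1 = 1 by rewrite /ev rmorph1 hornerC.
  split; first by rewrite -{1}ev1 psiE /evbe rmorph1 hornerC.
  by move=> x y; have [P ->] := al_gen x; have [Q ->] := al_gen y; rewrite -evM !psiE /evbe rmorphM !hornerE.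
pose psiZ := GRing.isZmodMorphism.Build _ _ _ psiB.
pose psiR := GRing.isMonoidMorphism.Build _ _ _ psiM.
exact: inhabits (HB.pack psi psiZ psiR : {rmorphism L -> M}).
Qed.

Lemma simple_extension_embedding (P0 : {poly K}) (rs : seq M) :
  P0 != 0 -> root (map_poly iL P0) al -> map_poly iM P0 = \prod_(r <- rs) ('X - r%:P) ->
  inhabited {rmorphism L -> M}.
Proof.
move=> P0_neq0 /eqP P0_root P0_split.
have [m m_root m_gen] := vanishing_ideal_generator P0_neq0 P0_root.
have m_gt1 : (1 < size m)%N.
  rewrite ltnNge; apply/negP => /size1_polyC m_const.
  move: P0_neq0; rewrite -dvd0p -(_ : m = 0) ?m_gen //.
  by move: m_root; rewrite m_const /ev map_polyC hornerC => /eqP; rewrite fmorph_eq0 => /eqP ->.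
have /dvdp_prod_XsubC[msk] : map_poly iM m %| \prod_(r <- rs) ('X - r%:P).
  by rewrite -P0_split dvdp_map m_gen.
case E: (mask msk rs) => [|be rs'] m_eqp.
  by move: (eqp_size m_eqp); rewrite big_nil size_poly1 size_map_poly => m1; rewrite m1 in m_gt1.
apply: (rmorph_of_root m_gen (be := be)).
by rewrite (eqp_root m_eqp) root_prod_XsubC mem_head.
Qed.

End SimpleExtensionEmbedding.

(* The inclusion of the prime field, taken from the 'F_p-algebra structure that
   [pPrimeCharType] puts on the same carrier. *)
Section PrimeFieldRmorphism.

Variables (R : fieldType) (p : nat) (pchar_p : p \in [pchar R]).

Definition prime_field_rmorph (a : 'F_p) : R := in_alg (pPrimeCharType pchar_p) a.
HB.instance Definition _ :=
  GRing.RMorphism.copy prime_field_rmorph (in_alg (pPrimeCharType pchar_p)).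

End PrimeFieldRmorphism.

Lemma expf_card_expn (F : finFieldType) (x : F) n : x ^+ (#|F| ^ n) = x.
Proof. by elim: n => [|n IHn]; rewrite ?expr1 // expnSr exprM IHn expf_card. Qed.

Lemma expf_card_pred (F : finFieldType) (x : F) : x != 0 -> x ^+ #|F|.-1 = 1.
Proof.
move=> x_neq0; apply: (mulIf x_neq0).
by rewrite mul1r -exprSr prednK ?expf_card // (ltn_trans _ (finNzRing_gt1 F)).
Qed.

Lemma finField_prim_root (F : finFieldType) : exists g : F, (#|F|.-1).-primitive_root g.
Proof.
have F_gt1 := finNzRing_gt1 F.
have : has (#|F|.-1).-primitive_root (enum (predC1 (0 : F))).
  apply: has_prim_root; last by rewrite -cardE cardC1.
  - by rewrite -ltnS prednK // ltnW.
  - by apply/allP => x; rewrite mem_enum /= => x_neq0; rewrite unity_rootE expf_card_pred.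
  - exact: enum_uniq.
by case/hasP => g _ g_prim; exists g.
Qed.

Lemma finField_embedding (E F : finFieldType) n : #|F| = (#|E| ^ n)%N ->
  inhabited {rmorphism E -> F}.
Proof.
move=> cardF; have [p p_pr pchar_pE] := finPcharP E.
have pchar_pF : p \in [pchar F].
  by apply: (card_finPcharP (n := (logn p #|E| * n)%N)) => //; rewrite cardF expnM -card_pprimeChar.
have [al al_prim] := finField_prim_root E.
pose P0 : {poly 'F_p} := 'X^#|F| - 'X.
apply: (@simple_extension_embedding _ _ _ (prime_field_rmorph pchar_pE)
  (prime_field_rmorph pchar_pF) al _ P0 (enum F)).
- move=> x; have [->|x_neq0] := eqVneq x 0; first by exists 0; rewrite rmorph0 horner0.
  have [i ->] := prim_rootP al_prim (expf_card_pred x_neq0).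
  by exists 'X^i; rewrite map_polyXn hornerXn.
- rewrite -size_poly_eq0 size_polyDl ?size_polyXn // size_polyN size_polyX ltnS finNzRing_gt1 //.
- by rewrite /root rmorphB /= map_polyXn map_polyX !hornerE cardF expf_card_expn subrr.
- by rewrite rmorphB /= map_polyXn map_polyX finField_genPoly big_enum.
Qed.

Lemma unity_root_rmorph_expn (E F : finFieldType) (f : {rmorphism E -> F}) k c (y : F) :
  #|E|.-1 = (k * c)%N -> y ^+ c = 1 -> exists z : E, y = f (z ^+ k).
Proof.
move=> cardE y_c; have [al al_prim] := finField_prim_root E.
have k_gt0 : (0 < k)%N.
  have : (0 < #|E|.-1)%N by rewrite -subn1 subn_gt0 finNzRing_gt1.
  by rewrite cardE muln_gt0 => /andP[].
have ze_prim : c.-primitive_root (al ^+ k).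
  by have := exp_prim_root al_prim k; rewrite cardE gcdnMr mulKn.
have fze_prim : c.-primitive_root (f (al ^+ k)) by rewrite fmorph_primitive_root.
have [m ->] := prim_rootP fze_prim y_c.
by exists (al ^+ m); rewrite -rmorphXn -!exprM mulnC.
Qed.

(** * Waring numbers of F_q and F_(q^b) *)

Definition sum_of_at_most_kpowers (R : nzRingType) (k s : nat) (x : R) : Prop :=
  exists2 l : seq R, (size l <= s)%N & x = \sum_(z <- l) z ^+ k.

Lemma sum_of_kpowersP (F : finFieldType) k s (x : F) : (0 < k)%N ->
  sum_of_kpowers k s x <-> sum_of_at_most_kpowers k s x.
Proof.
move=> k_gt0; split => [/existsP[f /eqP ->] | [l l_size ->]].
  exists [seq f i | i <- enum 'I_s]; first by rewrite size_map size_enum_ord.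
  by rewrite big_map big_enum.
pose l' := l ++ nseq (s - size l) 0.
have l'_size : size l' = s by rewrite size_cat size_nseq subnKC.
apply/existsP; exists [ffun i : 'I_s => nth 0 l' i]; apply/eqP.
have -> : \sum_(z <- l) z ^+ k = \sum_(z <- l') z ^+ k.
  rewrite big_cat /= [X in _ = _ + X]big1_seq ?addr0 // => z /andP[_].
  by rewrite mem_nseq => /andP[_ /eqP ->]; rewrite expr0n gtn_eqF.
by rewrite (big_nth 0) l'_size big_mkord; apply: eq_bigr => i _; rewrite ffunE.
Qed.

Lemma waring_okP (F : finFieldType) k s : (0 < k)%N ->
  waring_ok F k s <-> forall x : F, sum_of_at_most_kpowers k s x.
Proof.
move=> k_gt0; split => [/forallP ok x | ok]; first exact/sum_of_kpowersP.
by apply/forallP => x; apply/sum_of_kpowersP.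
Qed.

Lemma sum_of_at_most_kpowersD (R : nzRingType) k m n (x y : R) :
  sum_of_at_most_kpowers k m x -> sum_of_at_most_kpowers k n y ->
  sum_of_at_most_kpowers k (m + n) (x + y).
Proof.
move=> [l l_size ->] [l' l'_size ->]; exists (l ++ l'); last by rewrite big_cat.
by rewrite size_cat leq_add.
Qed.

Lemma sum_of_at_most_kpowers_sum (R : nzRingType) k t n (G : 'I_n -> R) :
  (forall j, sum_of_at_most_kpowers k t (G j)) ->
  sum_of_at_most_kpowers k (n * t) (\sum_(j < n) G j).
Proof.
elim: n G => [|n IHn] G G_sum; first by rewrite big_ord0; exists [::]; rewrite ?big_nil.
rewrite big_ord_recr mulSn addnC; apply: sum_of_at_most_kpowersD => //.
exact: IHn.
Qed.

Lemma waring_number_scale (E F : finFieldType) k k' b : (0 < b)%N ->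
  (forall t, waring_ok E k t -> waring_ok F k' (b * t)) ->
  (forall s, waring_ok F k' s -> waring_ok E k (s %/ b)) ->
  waring_number F k' = omap (muln b) (waring_number E k).
Proof.
move=> b_gt0 okEF okFE; rewrite /waring_number.
case: excluded_middle_informative => [exF|noF]; case: excluded_middle_informative => [exE|noE] //=.
- congr Some; case: ex_minnP => s okF minF; case: ex_minnP => t okE minE.
  by apply/eqP; rewrite eqn_leq minF ?okEF // mulnC -leq_divRL // minE ?okFE.
- by case: noE; case: exF => s /okFE; exists (s %/ b)%N.
- by case: noF; case: exE => t /okEF; exists (b * t)%N.
Qed.

Lemma count_fiber_le_div (T : Type) n (J : T -> 'I_n) (l : seq T) : (0 < n)%N ->
  exists j, (count (fun w => J w == j) l <= size l %/ n)%N.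
Proof.
move=> n_gt0; have count_sum : (\sum_(j < n) count (fun w => J w == j) l)%N = size l.
  elim: l => [|w l IHl] /=; first by rewrite big1.
  rewrite big_split /= IHl (bigD1 (J w)) //= eqxx big1 ?add1n // => j.
  by rewrite eq_sym => /negbTE ->.
have /existsP[j] : [exists j, count (fun w => J w == j) l <= size l %/ n]%N; last by exists j.
apply: contraT => /existsPn count_big.
have : (n * (size l %/ n).+1 <= size l)%N.
  rewrite -[X in (_ <= X)%N]count_sum -[X in (X * _)%N]card_ord -sum_nat_const.
  by apply: leq_sum => j _; rewrite ltnNge count_big.
by rewrite leqNgt mulnC ltn_ceil.
Qed.

Section WaringTransfer.

Variables (E F : finFieldType) (b c : nat).
Let q := #|E|.
Hypotheses (cardF : #|F| = (q ^ b)%N) (c_dvd : (c %| q.-1)%N)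
  (order_q : forall e, (b * c %| q ^ e - 1)%N = (b %| e)%N).

Let k := (q.-1 %/ c)%N.
Let k' := (#|F|.-1 %/ (b * c))%N.

Let q_gt1 : (1 < q)%N. Proof. exact: finNzRing_gt1. Qed.
Let b_gt0 : (0 < b)%N.
Proof. by case: b cardF (finNzRing_gt1 F) => // ->; rewrite expn0. Qed.

Let cardE_pred : q.-1 = (k * c)%N.
Proof. by rewrite divnK. Qed.

Let cardF_pred : #|F|.-1 = (k' * (b * c))%N.
Proof. by rewrite divnK // cardF -subn1 order_q. Qed.

Let k_gt0 : (0 < k)%N.
Proof.
have : (0 < q.-1)%N by rewrite -subn1 subn_gt0.
by rewrite cardE_pred muln_gt0 => /andP[].
Qed.

Let k'_gt0 : (0 < k')%N.
Proof.
have : (0 < #|F|.-1)%N by rewrite -subn1 subn_gt0 finNzRing_gt1.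
by rewrite cardF_pred muln_gt0 => /andP[].
Qed.

Section Embedding.

Variable psi : {rmorphism E -> F}.

Let pchar_nat_q : [pchar F].-nat q.
Proof.
have [p p_pr pchar_p] := finPcharP E.
have cardE : q = (p ^ logn p q)%N by exact: card_pprimeChar pchar_p.
by rewrite cardE pnatX pnatE // (rmorph_pchar psi pchar_p).
Qed.

Let expq_sum i n (G : 'I_n -> F) :
  (\sum_(j < n) G j) ^+ (q ^ i) = \sum_(j < n) G j ^+ (q ^ i).
Proof.
have expq_add (x y : F) : (x + y) ^+ (q ^ i) = x ^+ (q ^ i) + y ^+ (q ^ i).
  by apply: exprDn_pchar; rewrite pnatX pchar_nat_q.
by apply: (big_morph _ expq_add); rewrite expr0n expn_eq0 (gtn_eqF (ltnW q_gt1)).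
Qed.

Let psi_expq (x : E) i : psi x ^+ (q ^ i) = psi x.
Proof. by rewrite -rmorphXn expf_card_expn. Qed.

Section PowerBasis.

Variable th : F.
Hypothesis th_prim : (b * c).-primitive_root th.

Let th_expq_inj i j : (i < b)%N -> (j < b)%N -> th ^+ (q ^ i) = th ^+ (q ^ j) -> i = j.
Proof.
wlog ij : i j / (i <= j)%N => [wlog_ij i_b j_b th_ij|i_b j_b /eqP].
  by case/orP: (leq_total i j) => [ij|ji]; [exact: wlog_ij | exact/esym/(wlog_ij j i)].
rewrite (eq_prim_root_expr th_prim) eq_sym eqn_mod_dvd ?leq_pexp2l ?(ltnW q_gt1) //.
rewrite -(subnKC ij) expnD -[X in (_ - X)%N]muln1 -mulnBr Gauss_dvdr; last first.
  apply: coprimeXr; apply: (coprime_dvdl (_ : _ %| q ^ b - 1)%N); first by rewrite order_q.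
  apply: coprime_dvdr (dvdn_exp b_gt0 (dvdnn q)) _.
  by have := coprimenS (q ^ b - 1); rewrite subn1 prednK // expn_gt0 ltnW.
rewrite order_q; have [->|ji_gt0] := posnP (j - i); first by rewrite addn0.
by move/(dvdn_leq ji_gt0); lia.
Qed.

Lemma power_basis_free (d : 'I_b -> E) :
  \sum_(j < b) psi (d j) * th ^+ j = 0 -> forall j, d j = 0.
Proof.
move=> comb_eq0; pose dn n := if insub n is Some j then d j else 0.
have dnE (j : 'I_b) : dn j = d j by rewrite /dn valK.
pose P := \poly_(j < b) psi (dn j).
have P_root i : (i < b)%N -> root P (th ^+ (q ^ i)).
  move=> i_b; rewrite /root horner_poly.
  under eq_bigr => j _ do rewrite dnE -exprM mulnC exprM -[psi _](psi_expq _ i) -exprMn.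
  by rewrite -expq_sum comb_eq0 expr0n expn_eq0 (gtn_eqF (ltnW q_gt1)).
have P_eq0 : P = 0.
  apply: (roots_geq_poly_eq0 (rs := [seq th ^+ (q ^ i) | i <- iota 0 b])).
  - by apply/allP => x /mapP[i]; rewrite mem_iota => /andP[_ i_b] ->; apply: P_root.
  - rewrite map_inj_in_uniq ?iota_uniq // => i j.
    by rewrite !mem_iota !add0n => i_b j_b; apply: th_expq_inj.
  - by rewrite size_map size_iota size_poly.
move=> j; apply/eqP; rewrite -(fmorph_eq0 psi) -dnE.
by have := congr1 (fun Q : {poly F} => Q`_j) P_eq0; rewrite coef_poly ltn_ord coef0 => ->.
Qed.

Let comb (d : {ffun 'I_b -> E}) := \sum_(j < b) psi (d j) * th ^+ j.

Let comb_inj : injective comb.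
Proof.
move=> d1 d2 comb_eq; apply/ffunP => j; apply/eqP; rewrite -subr_eq0; apply/eqP.
apply: (power_basis_free (d := fun j => d1 j - d2 j)).
under eq_bigr => i _ do rewrite rmorphB mulrBl.
by rewrite sumrB; apply/eqP; rewrite subr_eq0 -/(comb d1) -/(comb d2) comb_eq.
Qed.

Let comb_surj x : exists d, x = comb d.
Proof.
have card_le : (#|F| <= #|{ffun 'I_b -> E}|)%N by rewrite card_ffun card_ord cardF.
have [comb' _ combK] := inj_card_bij comb_inj card_le.
by exists (comb' x); rewrite combK.
Qed.

Lemma kpower_decomp (w : F) : exists (j : 'I_b) (z : E), w ^+ k' = th ^+ j * psi (z ^+ k).
Proof.
have [->|w_neq0] := eqVneq w 0.
  by exists (Ordinal b_gt0), 0; rewrite !expr0n !gtn_eqF // !mulr0n rmorph0 mulr0.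
have : (w ^+ k') ^+ (b * c) = 1 by rewrite -exprM -cardF_pred expf_card_pred.
case/(prim_rootP th_prim) => -[i _] /= ->; exists (Ordinal (ltn_pmod i b_gt0)).
have [z thb_eq] : exists z, th ^+ (b * (i %/ b)) = psi (z ^+ k).
  apply: unity_root_rmorph_expn cardE_pred _.
  by rewrite -exprM mulnAC exprM (prim_expr_order th_prim) expr1n.
by exists z; rewrite -thb_eq -exprD addnC mulnC -divn_eq.
Qed.

Lemma kpower_compose j (z : E) : exists w : F, th ^+ j * psi (z ^+ k) = w ^+ k'.
Proof.
have [->|z_neq0] := eqVneq z 0.
  by exists 0; rewrite !expr0n !gtn_eqF // rmorph0 mulr0.
have [w ->] : exists w : F, th ^+ j * psi (z ^+ k) = idfun (w ^+ k').
  apply: unity_root_rmorph_expn cardF_pred _.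
  rewrite exprMn exprAC (prim_expr_order th_prim) expr1n mul1r -rmorphXn -exprM.
  by rewrite mulnA mulnAC exprM -cardE_pred expf_card_pred // expr1n rmorph1.
by exists w.
Qed.

Lemma waring_ok_mul t : waring_ok E k t -> waring_ok F k' (b * t).
Proof.
move=> /(waring_okP _ _ k_gt0) okE; apply/(waring_okP _ _ k'_gt0) => x.
have [d ->] := comb_surj x; apply: sum_of_at_most_kpowers_sum => j.
have [l l_size ->] := okE (d j).
have [W W_eq] := fin_all_exists (kpower_compose j).
exists [seq W z | z <- l]; first by rewrite size_map.
by rewrite big_map rmorph_sum mulr_suml; apply: eq_bigr => z _; rewrite mulrC W_eq.
Qed.

Lemma waring_ok_div s : waring_ok F k' s -> waring_ok E k (s %/ b).
Proof.
move=> /(waring_okP _ _ k'_gt0) okF; apply/(waring_okP _ _ k_gt0) => y.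
have [J /fin_all_exists[Z JZ_eq]] := fin_all_exists kpower_decomp.
have [l l_size l_sum] := okF (comb [ffun => y]).
pose e := [ffun j => \sum_(w <- l | J w == j) Z w ^+ k].
have e_eq : e = [ffun => y].
  apply: comb_inj; rewrite l_sum [RHS](partition_big J xpredT) //=.
  apply: eq_bigr => j _; rewrite ffunE rmorph_sum mulr_suml.
  by apply: eq_bigr => w /eqP <-; rewrite JZ_eq mulrC.
have [j j_count] := count_fiber_le_div J l b_gt0.
exists [seq Z w | w <- l & J w == j].
  by rewrite size_map size_filter (leq_trans j_count) // leq_div2r.
move/ffunP/(_ j): e_eq; rewrite !ffunE => <-.
by rewrite big_map big_filter.
Qed.

End PowerBasis.

End Embedding.

Lemma waring_number_transfer : waring_number F k' = omap (muln b) (waring_number E k).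
Proof.
have [psi] := finField_embedding cardF.
have [g g_prim] := finField_prim_root F.
have th_prim : (b * c).-primitive_root (g ^+ k').
  by have := exp_prim_root g_prim k'; rewrite cardF_pred gcdnMr mulKn.
exact: waring_number_scale b_gt0 (waring_ok_mul psi th_prim) (waring_ok_div psi th_prim).
Qed.

End WaringTransfer.

Local Close Scope ring_scope.

Theorem mainTheorem16 (p b : nat) (hp : prime p) (hb : 1 < b)
  (hb2 : ~ (exists n, b = 2 ^ n)) (hpb : ~~ (p %| b)) :
  (forall a c : nat, 0 < a -> 0 < c -> primitive_divisor p a c ->
     totient (radn b) %| a -> coprime ((p ^ a - 1) %/ c) b ->
     forall (E F : finFieldType), #|E| = p ^ a -> #|F| = p ^ (a * b) ->
       waring_number F ((p ^ (a * b) - 1) %/ (b * c))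
       = omap (muln b) (waring_number E ((p ^ a - 1) %/ c)))
  /\
  (forall c : nat, 0 < c -> primitive_divisor p (totient (radn b)) c ->
     coprime ((p ^ totient (radn b) - 1) %/ c) b ->
     forall (E F : finFieldType), #|E| = p ^ totient (radn b) ->
       #|F| = p ^ (b * totient (radn b)) ->
       waring_number F ((p ^ (b * totient (radn b)) - 1) %/ (b * c))
       = omap (muln b) (waring_number E ((p ^ totient (radn b) - 1) %/ c))).
Proof.
have b_gt0 : 0 < b := ltnW hb.
have part_a a c : 0 < c -> primitive_divisor p a c -> totient (radn b) %| a ->
    coprime ((p ^ a - 1) %/ c) b ->
    forall (E F : finFieldType), #|E| = p ^ a -> #|F| = p ^ (a * b) ->
    waring_number F ((p ^ (a * b) - 1) %/ (b * c))
    = omap (muln b) (waring_number E ((p ^ a - 1) %/ c)).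
  move=> c_gt0 [c_dvd _] totient_dvd_a cofactor_coprime E F cardE cardF.
  have cardF' : #|F| = #|E| ^ b by rewrite cardF cardE expnM.
  have := waring_number_transfer cardF'; rewrite cardF cardE -!subn1; apply => // e.
  exact: dvdn_expn_sub1.
split => [a c _|c c_gt0 c_prim cofactor_coprime E F cardE cardF]; first exact: part_a.
by rewrite mulnC; apply: part_a; rewrite // mulnC.
Qed.
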